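(* Let $\mu$ be a centered log-concave probability measure on $\mathbb{R}^n$ with density $f$. Then for every $t\geq 6n$, $$\mu(R_t(\mu))\geq 1-e^{-t/5}.$$
   Context: A probability measure on $\mathbb{R}^n$ is log-concave (full-dimensional) if it has a density $f$ with $\ln f$ concave; it is centered if its barycenter $\int x f(x)\,dx$ is $0$. For $t\geq 0$, the super-level set is $R_t(\mu)=\{x\in\mathbb{R}^n: f(x)\geq e^{-t}\|f\|_\infty\}$. *)

(* R^n is modelled as n.-tuple R,
   which carries the product (= Borel) sigma-algebra of the library. *)
From mathcomp Require Import all_boot all_order all_algebra.
From mathcomp Require Import all_classical all_reals all_analysis.
Set Implicit Arguments. Unset Strict Implicit. Unset Printing Implicit Defensive.
Import Order.TTheory GRing.Theory Num.Theory.
Local Open Scope classical_set_scope.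
Local Open Scope ring_scope.

Section defs.
Variable R : realType.

(* Lebesgue integral on R^n of a (nonnegative) function, defined as the
   iterated one-dimensional Lebesgue integral (Tonelli). *)
Fixpoint leb_int (n : nat) : (n.-tuple R -> \bar R) -> \bar R :=
  match n return (n.-tuple R -> \bar R) -> \bar R with
  | 0 => fun g => g [tuple]
  | n'.+1 => fun g =>
      (\int[@lebesgue_measure R]_x leb_int (fun t : n'.-tuple R => g (cons_tuple x t)))%E
  end.

Definition dens_measure n (f : n.-tuple R -> R) (A : set (n.-tuple R)) : \bar R :=
  leb_int (fun x => ((\1_A x : R) * f x)%:E).

Definition tcomb n (l : R) (x y : n.-tuple R) : n.-tuple R :=
  [tuple l * tnth x i + (1 - l) * tnth y i | i < n].

(* f >= 0 with ln f concave (ln 0 = -oo), i.e.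
   f(l x + (1-l) y) >= f(x)^l f(y)^(1-l) *)
Definition log_concave n (f : n.-tuple R -> R) : Prop :=
  (forall x, 0 <= f x) /\
  forall x y (l : R), 0 <= l <= 1 ->
    f x `^ l * f y `^ (1 - l) <= f (tcomb l x y).

Definition prob_density n (f : n.-tuple R -> R) : Prop :=
  measurable_fun setT f /\ (forall x, 0 <= f x) /\
  leb_int (fun x => (f x)%:E) = 1%E.

(* barycenter of f is 0: each coordinate x_i is f-integrable and
   int x_i f(x) dx = 0 (positive part equals negative part) *)
Definition centered n (f : n.-tuple R -> R) : Prop :=
  forall i : 'I_n,
    (leb_int (fun x => (`|tnth x i| * f x)%:E) < +oo)%E /\
    leb_int (fun x => (Num.max (tnth x i) 0 * f x)%:E) =
    leb_int (fun x => (Num.max (- tnth x i) 0 * f x)%:E).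

Definition fsup n (f : n.-tuple R -> R) : \bar R :=
  ereal_sup [set (f x)%:E | x in setT].

Definition superlevel n (f : n.-tuple R -> R) (t : R) : set (n.-tuple R) :=
  [set x | ((expR (- t))%:E * fsup f <= (f x)%:E)%E].

End defs.

From mathcomp Require Import all_boot all_order all_algebra.
From mathcomp Require Import all_classical all_reals all_analysis.
From mathcomp Require Import measurable_realfun ring lra.
Set Implicit Arguments. Unset Strict Implicit. Unset Printing Implicit Defensive.
Import Order.TTheory GRing.Theory Num.Theory.
Local Open Scope classical_set_scope.
Local Open Scope ring_scope.

(* By log-concavity, sqrt (f x) * sqrt (f y) <= f ((x + y) / 2); integrating in x and
   rescaling by 1/2 (Jacobian 2^n) gives sqrt (f y) * \int sqrt f <= 2^n for every y.
   On the sublevel set {f < c} one has f <= sqrt c * sqrt f, hence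
   mu {f < c} <= 2^n * sqrt (c / f y).  The same bound shows that ||f||_oo is finite;
   choosing f y > e^-1 ||f||_oo and c = e^-t ||f||_oo yields
   mu {f < c} <= 2^n e^((1 - t) / 2) <= e^(-t/5) for t >= 6n. *)

Section iterated_integral.
Variable R : realType.
Local Open Scope ereal_scope.

Lemma leb_int_ge0 n (g : n.-tuple R -> \bar R) :
  (forall x, 0 <= g x) -> 0 <= leb_int g.
Proof.
elim: n g => [|n IH] g g0 //=.
by apply: integral_ge0 => x _; apply: IH.
Qed.

Lemma measurable_leb_int n d (U : measurableType d) (G : U * n.-tuple R -> \bar R) :
  measurable_fun setT G -> (forall z, 0 <= G z) ->
  measurable_fun setT (fun u => leb_int (fun t => G (u, t))).
Proof.
elim: n d U G => [|n IH] d U G mG G0 /=.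
  by apply: (measurableT_comp mG); exact: measurable_fun_pair.
pose H (p : (U * R) * n.-tuple R) := G (p.1.1, cons_tuple p.1.2 p.2).
have mH : measurable_fun setT H.
  apply: (measurableT_comp mG); apply: measurable_fun_pair.
    exact: measurableT_comp.
  by apply: measurable_cons => //; exact: measurableT_comp.
apply: (@measurable_fun_fubini_tonelli_F _ _ U _ R lebesgue_measure _
  (IH _ _ H mH (fun z => G0 _))).
by move=> z; apply: leb_int_ge0 => t; exact: G0.
Qed.

Lemma measurable_leb_int_cons n (g : n.+1.-tuple R -> \bar R) :
  measurable_fun setT g -> (forall z, 0 <= g z) ->
  measurable_fun setT (fun x : R => leb_int (fun t => g (cons_tuple x t))).
Proof.
move=> mg g0.
apply: (@measurable_leb_int n _ R (fun p => g (cons_tuple p.1 p.2))) => [|z].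
  by apply: (measurableT_comp mg); exact: measurable_cons.
exact: g0.
Qed.

Lemma measurable_cons_section n (g : n.+1.-tuple R -> \bar R) x :
  measurable_fun setT g -> measurable_fun setT (fun t : n.-tuple R => g (cons_tuple x t)).
Proof. by move=> mg; apply: (measurableT_comp mg); exact: measurable_cons. Qed.
Arguments measurable_cons_section {n g} x.

Lemma le_leb_int n (g h : n.-tuple R -> \bar R) :
  measurable_fun setT g -> measurable_fun setT h ->
  (forall x, 0 <= g x) -> (forall x, g x <= h x) -> leb_int g <= leb_int h.
Proof.
elim: n g h => [|n IH] g h mg mh g0 gh //=.
have h0 x : 0 <= h x by apply: le_trans (gh x).
apply: ge0_le_integral => //.
- by move=> x _; apply: leb_int_ge0.
- exact: measurable_leb_int_cons.
- exact: measurable_leb_int_cons.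
- by move=> x _; apply: IH => //; exact: measurable_cons_section.
Qed.

Lemma leb_intD n (g h : n.-tuple R -> \bar R) :
  measurable_fun setT g -> measurable_fun setT h ->
  (forall x, 0 <= g x) -> (forall x, 0 <= h x) ->
  leb_int (fun x => g x + h x) = leb_int g + leb_int h.
Proof.
elim: n g h => [|n IH] g h mg mh g0 h0 //=.
under eq_integral => x _ do
  rewrite (IH _ _ (measurable_cons_section x mg) (measurable_cons_section x mh)) //.
apply: ge0_integralD => //.
- by move=> x _; apply: leb_int_ge0.
- exact: measurable_leb_int_cons.
- by move=> x _; apply: leb_int_ge0.
- exact: measurable_leb_int_cons.
Qed.

Lemma leb_intZl n (g : n.-tuple R -> \bar R) (k : \bar R) :
  measurable_fun setT g -> (forall x, 0 <= g x) -> 0 <= k ->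
  leb_int (fun x => k * g x) = k * leb_int g.
Proof.
elim: n g => [|n IH] g mg g0 k0 //=.
under eq_integral => x _ do rewrite (IH _ (measurable_cons_section x mg)) //.
apply: ge0_integralZl => //.
- exact: measurable_leb_int_cons.
- by move=> x _; apply: leb_int_ge0.
Qed.

Lemma leb_int_monotone_convergence n (g : nat -> n.-tuple R -> \bar R) :
  (forall k, measurable_fun setT (g k)) -> (forall k x, 0 <= g k x) ->
  (forall x, nondecreasing_seq (g ^~ x)) ->
  leb_int (fun x => limn (g ^~ x)) = limn (fun k => leb_int (g k)).
Proof.
elim: n g => [|n IH] g mg g0 nd //=.
have sectionE x : leb_int (fun t => limn (g ^~ (cons_tuple x t))) =
    limn (fun k => leb_int (fun t => g k (cons_tuple x t))).
  by apply: IH => // k; exact: measurable_cons_section.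
under eq_integral => x _ do rewrite sectionE.
apply: monotone_convergence => //.
- by move=> k; exact: measurable_leb_int_cons.
- by move=> k x _; apply: leb_int_ge0.
- move=> x _ a b ab; apply: le_leb_int => //.
  + exact: measurable_cons_section.
  + exact: measurable_cons_section.
  + by move=> t; apply: nd.
Qed.

End iterated_integral.

Section change_of_variables.
Variable R : realType.
Local Notation mu := (@lebesgue_measure R).

Lemma integral_affine (a c : R) (g : R -> \bar R) : 0 < c ->
  measurable_fun setT g -> (forall x, 0 <= g x)%E ->
  (\int[mu]_x g (a + c * x)%R = c^-1%:E * \int[mu]_x g x)%E.
Proof.
move=> c0 mg g0.
pose phi := (fun x : R => a + c * x) : measurableTypeR R -> measurableTypeR R.
have mphi : measurable_fun setT phi by apply: measurable_funD => //; exact: measurable_funM.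
have cinv0 : 0 <= c^-1 by rewrite invr_ge0 ltW.
pose cinv : {nonneg R} := NngNum cinv0.
have phi_itv (x1 x2 : R) :
    phi @^-1` `]x1, x2]%classic = `](x1 - a) / c, (x2 - a) / c]%classic.
  apply/seteqP; split => z; rewrite /= !in_itv /= /phi => /andP[h1 h2]; apply/andP; split.
  - by rewrite ltr_pdivrMr //; lra.
  - by rewrite ler_pdivlMr //; lra.
  - by move: h1; rewrite ltr_pdivrMr //; lra.
  - by move: h2; rewrite ler_pdivlMr //; lra.
have pushE A : measurable A ->
    pushforward mu phi A = mscale cinv mu A.
  move=> mA.
  have c0' : 0 <= c by exact: ltW.
  have scaleE : mu A = (c%:E * pushforward mu phi A)%E.
    have := @lebesgue_measure_unique R (mscale (NngNum c0') (pushforward mu phi)).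
    move=> /(_ mphi) uniq; apply: uniq mA => _ [[x1 x2] _ <-].
    change (mu `]x1, x2] = c%:E * mu (phi @^-1` `]x1, x2]))%E.
    rewrite phi_itv !lebesgue_measure_itv /= !lte_fin.
    rewrite ltr_pM2r ?invr_gt0 // ltrD2r.
    case: ifP => _; last by rewrite mule0.
    rewrite -!EFinD -EFinM; congr (_%:E); field; exact: lt0r_neq0.
  by rewrite /mscale /= scaleE muleA -EFinM mulVf ?gt_eqF // mul1e.
transitivity (\int[pushforward mu phi]_y g y)%E.
  by rewrite ge0_integral_pushforward // preimage_setT.
rewrite (eq_measure_integral (mscale cinv mu)); last by move=> A mA _; exact: pushE.
by rewrite ge0_integral_mscale.
Qed.

End change_of_variables.

Section convex_combination.
Variable R : realType.
Local Open Scope ereal_scope.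

Lemma tcomb_cons n (l x y : R) (t s : n.-tuple R) :
  tcomb l (cons_tuple x t) (cons_tuple y s) =
  cons_tuple (l * x + (1 - l) * y)%R (tcomb l t s).
Proof.
apply: eq_from_tnth => i; rewrite tnth_mktuple.
by case: (unliftP ord0 i) => [j ->|->]; rewrite ?tnthS ?tnth_mktuple ?tnth0.
Qed.

Lemma measurable_tcomb n (l : R) (y : n.-tuple R) :
  measurable_fun setT (fun x : n.-tuple R => tcomb l x y).
Proof.
apply/measurable_fun_tnthP => i.
rewrite (_ : _ \o _ = fun x : n.-tuple R => l * tnth x i + (1 - l) * tnth y i)%R.
  by apply: measurable_funD => //; apply: measurable_funM => //; exact: measurable_tnth.
by apply: funext => x /=; rewrite tnth_mktuple.
Qed.

Lemma leb_int_tcomb n (l : R) (y : n.-tuple R) (g : n.-tuple R -> \bar R) : (0 < l)%R ->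
  measurable_fun setT g -> (forall x, 0 <= g x) ->
  leb_int (fun x => g (tcomb l x y)) = ((l ^+ n)^-1)%:E * leb_int g.
Proof.
move=> l0; elim: n y g => [|n IH] y g mg g0.
  by rewrite /= expr0 invr1 mul1e [tcomb _ _ _]tuple0.
case/tupleP: y => y0 y /=.
have sectionE x : leb_int (fun t => g (tcomb l (cons_tuple x t) (cons_tuple y0 y))) =
    ((l ^+ n)^-1)%:E * leb_int (fun t => g (cons_tuple ((1 - l) * y0 + l * x)%R t)).
  rewrite -(IH y); last 2 first.
  - exact: measurable_cons_section.
  - by move=> t; exact: g0.
  by congr leb_int; apply: funext => t; rewrite tcomb_cons addrC.
under eq_integral do rewrite sectionE.
pose G x := leb_int (fun t : n.-tuple R => g (cons_tuple x t)).
have mG : measurable_fun setT G by exact: measurable_leb_int_cons.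
have G0 x : 0 <= G x by apply: leb_int_ge0 => t; exact: g0.
rewrite ge0_integralZl //; last 3 first.
- by apply: (measurableT_comp mG); apply: measurable_funD => //; exact: measurable_funM.
- by move=> x _; exact: G0.
- by rewrite lee_fin invr_ge0 exprn_ge0 // ltW.
by rewrite (integral_affine _ l0 mG G0) muleA -EFinM exprS invfM mulrC.
Qed.

End convex_combination.

Lemma measurable_sqrt_comp (R : realType) d (T : measurableType d) (h : T -> R) :
  measurable_fun setT h -> measurable_fun setT (fun x => Num.sqrt (h x)).
Proof.
move=> mh; apply: (measurableT_comp _ mh).
exact: continuous_measurable_fun (@sqrt_continuous R).
Qed.

Section supremum.
Variables (R : realType) (n : nat) (f : n.-tuple R -> R).
Local Open Scope ereal_scope.

Lemma fsup_ubound x : (f x)%:E <= fsup f.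
Proof. by apply: ereal_sup_ubound; exists x. Qed.

Lemma fsup_gtP (r : R) : r%:E < fsup f -> exists y, (r < f y)%R.
Proof. by move=> /ereal_sup_gt[_ [y _ <-]]; rewrite lte_fin; exists y. Qed.

Lemma superlevelE (m t : R) : fsup f = m%:E ->
  superlevel f t = ~` [set x | f x < expR (- t) * m]%R.
Proof.
rewrite /superlevel => ->; apply/seteqP; split => x /=;
  by rewrite -EFinM lee_fin leNgt => /negP.
Qed.

End supremum.

Section density.
Variables (R : realType) (n : nat) (f : n.-tuple R -> R).
Hypotheses (mf : measurable_fun setT f) (f0 : forall x, 0 <= f x).
Local Open Scope ereal_scope.

Lemma measurable_indic_density (A : set (n.-tuple R)) : measurable A ->
  measurable_fun setT (fun x => ((\1_A x : R) * f x)%:E).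
Proof. by move=> mA; apply/measurable_EFinP; exact: measurable_funM. Qed.

Lemma indic_density_ge0 (A : set (n.-tuple R)) x : 0 <= ((\1_A x : R) * f x)%:E.
Proof. by rewrite lee_fin mulr_ge0. Qed.

Lemma measurable_sublevel (c : R) : measurable [set x | f x < c]%R.
Proof.
have -> : [set x | f x < c]%R = f @^-1` `]-oo, c[ by apply/seteqP; split => x; rewrite /= in_itv.
by rewrite -[_ @^-1` _]setTI; exact: mf (measurable_itv _).
Qed.

Lemma dens_measure_ge0 (A : set (n.-tuple R)) : 0 <= dens_measure f A.
Proof. by apply: leb_int_ge0 => x; exact: indic_density_ge0. Qed.

Lemma dens_measureC (A : set (n.-tuple R)) : measurable A ->
  dens_measure f A + dens_measure f (~` A) = leb_int (fun x => (f x)%:E).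
Proof.
move=> mA; rewrite /dens_measure -leb_intD; last 4 first.
- exact: measurable_indic_density.
- by apply: measurable_indic_density; exact: measurableC.
- exact: indic_density_ge0.
- exact: indic_density_ge0.
congr leb_int; apply: funext => x; rewrite -EFinD -mulrDl !indicE in_setC.
by case: (x \in A); rewrite /= ?addr0 ?add0r mul1r.
Qed.

Lemma leb_int_sublevel_lim :
  leb_int (fun x => (f x)%:E) = limn (fun k => dens_measure f [set x | f x < k%:R]%R).
Proof.
rewrite -leb_int_monotone_convergence => [|k|k x|x a b ab].
- congr leb_int; apply: funext => x; apply/esym/lim_near_cst => //.
  near=> k; rewrite indicE mem_set ?mul1r //.
  by near: k; exact: nbhs_infty_gtr.
- exact: measurable_indic_density (measurable_sublevel _).
- exact: indic_density_ge0.
- rewrite lee_fin ler_wpM2r // !indicE; have [|] := boolP (x \in _) => //= xa.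
  by rewrite mem_set ?ler01 //= (lt_le_trans (set_mem xa)) // ler_nat.
Unshelve. all: by end_near.
Qed.

End density.

Section log_concave_density.
Variables (R : realType) (n : nat) (f : n.-tuple R -> R).
Hypotheses (mf : measurable_fun setT f) (lcf : log_concave f).
Let f0 : forall x, 0 <= f x := lcf.1.
Local Open Scope ereal_scope.

Lemma sqrt_mul_le_midpoint x y :
  (Num.sqrt (f y) * Num.sqrt (f x) <= f (tcomb (2^-1)%R x y))%R.
Proof.
have := lcf.2 x y (2^-1)%R.
rewrite (_ : 1 - 2^-1 = 2^-1 :> R)%R; last by field.
rewrite !powR12_sqrt // mulrC; apply.
by apply/andP; split; lra.
Qed.

Lemma leb_int_sqrt_mul_le y :
  leb_int (fun x => (Num.sqrt (f y) * Num.sqrt (f x))%:E) <=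
  (2 ^+ n)%:E * leb_int (fun x => (f x)%:E).
Proof.
have half_gt0 : (0 < 2^-1 :> R)%R by rewrite invr_gt0.
have mF : measurable_fun setT (fun x => (f x)%:E) by exact/measurable_EFinP.
have -> : (2 ^+ n)%:E = (((2^-1) ^+ n)^-1)%:E :> \bar R by rewrite exprVn invrK.
rewrite -(leb_int_tcomb y half_gt0 mF) => [|x]; last by rewrite lee_fin.
apply: le_leb_int => [||x|x]; rewrite ?lee_fin ?mulr_ge0 ?sqrtr_ge0 //.
- apply/measurable_EFinP; apply: measurable_funM => //; exact: measurable_sqrt_comp.
- by apply/measurable_EFinP; apply: (measurableT_comp mf); exact: measurable_tcomb.
- exact: sqrt_mul_le_midpoint.
Qed.

Lemma dens_measure_sublevel_le y c : (0 < f y)%R -> (0 <= c)%R ->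
  dens_measure f [set x | f x < c]%R <=
  (Num.sqrt c / Num.sqrt (f y) * 2 ^+ n)%:E * leb_int (fun x => (f x)%:E).
Proof.
move=> fy0 c0.
have sfy0 : (0 < Num.sqrt (f y))%R by rewrite sqrtr_gt0.
have k0 : (0 <= Num.sqrt c / Num.sqrt (f y))%R by rewrite divr_ge0 ?sqrtr_ge0 // ltW.
have mS : measurable_fun setT (fun x => (Num.sqrt (f y) * Num.sqrt (f x))%:E).
  apply/measurable_EFinP; apply: measurable_funM => //; exact: measurable_sqrt_comp.
apply: (@le_trans _ _ ((Num.sqrt c / Num.sqrt (f y))%:E *
    leb_int (fun x => (Num.sqrt (f y) * Num.sqrt (f x))%:E))).
  rewrite -leb_intZl => [||x|]; rewrite ?lee_fin ?mulr_ge0 ?sqrtr_ge0 //.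
  apply: le_leb_int => [||x|x]; rewrite ?lee_fin ?mulr_ge0 ?sqrtr_ge0 //.
  - exact: measurable_indic_density mf _ (measurable_sublevel mf c).
  - exact: measurable_funeM.
  rewrite mulrA divfK ?gt_eqF // indicE.
  have [fxc|] := boolP (x \in [set x | f x < c]%R); last by rewrite mul0r mulr_ge0 ?sqrtr_ge0.
  rewrite mul1r -{1}[f x]sqr_sqrtr // expr2 ler_wpM2r ?sqrtr_ge0 // ler_sqrt //.
  by move: fxc; rewrite inE => /ltW.
rewrite [in leRHS]EFinM -muleA; apply: lee_wpmul2l; first by rewrite lee_fin.
exact: leb_int_sqrt_mul_le.
Qed.

End log_concave_density.

Section probability_density.
Variables (R : realType) (n : nat) (f : n.-tuple R -> R).
Hypotheses (pf : prob_density f) (lcf : log_concave f).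
Let mf := pf.1.
Let f0 := pf.2.1.
Let f1 := pf.2.2.
Local Open Scope ereal_scope.

Lemma dens_measure_sublevel_bound y c : (0 < f y)%R -> (0 <= c)%R ->
  dens_measure f [set x | f x < c]%R <= (Num.sqrt c / Num.sqrt (f y) * 2 ^+ n)%:E.
Proof. by move=> fy0 c0; rewrite -[leRHS]mule1 -f1; exact: dens_measure_sublevel_le. Qed.

Lemma dens_measure_sublevel_eq0 c : fsup f = +oo -> (0 <= c)%R ->
  dens_measure f [set x | f x < c]%R = 0.
Proof.
move=> fsupoo c0; apply/eqP; rewrite eq_le dens_measure_ge0 // andbT.
apply/lee_addgt0Pr => e e0; rewrite add0e.
pose K := (Num.sqrt c * 2 ^+ n / e)%R.
have K0 : (0 <= K)%R by rewrite divr_ge0 ?mulr_ge0 ?sqrtr_ge0 ?exprn_ge0 // ltW.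
have [y Ky] : exists y, (K ^+ 2 + 1 < f y)%R by apply: fsup_gtP; rewrite fsupoo ltry.
have fy0 : (0 < f y)%R by apply: lt_trans Ky; rewrite ltr_wpDl ?sqr_ge0.
have K_lt : (K < Num.sqrt (f y))%R.
  by rewrite -(ger0_norm K0) -sqrtr_sqr ltr_sqrt //; apply: lt_trans Ky; rewrite ltrDl.
apply: (le_trans (dens_measure_sublevel_bound fy0 c0)); rewrite lee_fin.
rewrite mulrAC ler_pdivrMr ?sqrtr_gt0 //.
have -> : (Num.sqrt c * 2 ^+ n = K * e)%R by rewrite divfK ?gt_eqF.
by rewrite mulrC ler_wpM2l // ltW.
Qed.

Lemma fsup_fin_gt0 : exists2 m, (0 < m)%R & fsup f = m%:E.
Proof.
have : 0 <= fsup f by rewrite (le_trans _ (fsup_ubound f (nseq_tuple n 0%R))) ?lee_fin.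
case fsupE : (fsup f) => [m| |] // m0.
  exists m => //; rewrite lt_neqAle -lee_fin m0 andbT.
  apply: contra_eqN f1 => /eqP m_eq0.
  have fx0 x : f x = 0%R.
    by apply/eqP; rewrite eq_le f0 andbT -lee_fin (le_trans (fsup_ubound f x)) // fsupE m_eq0.
  rewrite (_ : (fun x => (f x)%:E) = (fun x => 0 * (f x)%:E)); last first.
    by apply: funext => x; rewrite fx0 mul0e.
  by rewrite leb_intZl // ?mul0e 1?eq_sym ?onee_eq0 //; exact/measurable_EFinP.
move: f1; rewrite leb_int_sublevel_lim //.
under eq_fun do rewrite dens_measure_sublevel_eq0 //.
by rewrite lim_cst // => /eqP; rewrite eq_sym onee_eq0.
Qed.

End probability_density.

Section numerics.
Variable R : realType.

Lemma sqrt_expR (x : R) : Num.sqrt (expR x) = expR (x / 2).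
Proof.
rewrite -[in LHS](_ : expR (x / 2) ^+ 2 = expR x).
  by rewrite sqrtr_sqr ger0_norm // expR_ge0.
by rewrite expr2 -expRD; congr expR; field.
Qed.

Lemma sqrt_level_ratio_le (t m p : R) : 0 < m -> m * expR (-1) < p ->
  Num.sqrt (expR (- t) * m) / Num.sqrt p <= expR ((1 - t) / 2).
Proof.
move=> m0 mp.
have p0 : 0 < p by apply: lt_trans mp; rewrite mulr_gt0 ?expR_gt0.
have em0 : 0 <= expR (- t) * m by rewrite mulr_ge0 ?expR_ge0 ?(ltW m0).
rewrite -sqrtrV ?(ltW p0) // -sqrtrM // -sqrt_expR ler_sqrt ?expR_ge0 //.
rewrite (addrC 1) expRD -mulrA ler_pM2l ?expR_gt0 // ler_pdivrMr //.
rewrite -(ler_pM2r (expR_gt0 (-1))) mulrAC -expRD addrN expR0 mul1r.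
exact: ltW.
Qed.

Lemma expR_level_bound (n : nat) (t : R) : (0 < n)%N -> 6 * n%:R <= t ->
  expR ((1 - t) / 2) * 2 ^+ n <= expR (- t / 5).
Proof.
move=> n0 ht.
have two_le_e : 2 ^+ n <= expR n%:R :> R.
  rewrite -[X in expR X]mulr1 expRM_natl lerXn2r ?nnegrE ?expR_ge0 //.
  by have := expR_ge1Dx (1 : R); lra.
apply: le_trans (ler_wpM2l (expR_ge0 _) two_le_e) _.
rewrite -expRD ler_expR.
have : 1 <= n%:R :> R by rewrite ler1n.
lra.
Qed.

End numerics.

Lemma dens_measure_superlevel_dim0 (R : realType) (f : 0.-tuple R -> R) (t : R) :
  prob_density f -> 0 <= t -> dens_measure f (superlevel f t) = 1%E.
Proof.
move=> [_ [_ f1]] t0.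
have f1' : f [tuple] = 1 by case: f1.
have fsupE : fsup f = 1%E.
  apply/eqP; rewrite eq_le; apply/andP; split.
    by apply: ge_ereal_sup => _ [x _ <-]; rewrite tuple0 f1'.
  by apply: ereal_sup_ubound; exists [tuple]; rewrite ?f1'.
rewrite /dens_measure /= indicE mem_set ?mul1r ?f1' //.
by rewrite /superlevel /= fsupE mule1 f1' lee_fin expR_le1; lra.
Qed.

Theorem lemma3p1 (R : realType) (n : nat) (f : n.-tuple R -> R) :
  prob_density f -> log_concave f -> centered f ->
  forall t : R, (6 * n%:R <= t) ->
    (dens_measure f (superlevel f t) >= (1 - expR (- t / 5))%:E)%E.
Proof.
move=> pf lcf _ t ht; have [mf [f0 f1]] := pf.
(* R^0 is a single point carrying all the mass; the bound below is too weak there for small t. *)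
case: n => [|n] in f pf lcf ht mf f0 f1 *.
  rewrite dens_measure_superlevel_dim0 //; last by rewrite mulr0 in ht.
  rewrite -[X in (_ <= X)%E]/(1%:E) lee_fin.
  by have := expR_ge0 (- t / 5); lra.
have [m m0 fsupE] := fsup_fin_gt0 pf lcf.
have [y my] : exists y, m * expR (-1) < f y.
  by apply: fsup_gtP; rewrite fsupE lte_fin gtr_pMr // expR_lt1 ltrN10.
have fy0 : 0 < f y by apply: lt_trans my; rewrite mulr_gt0 ?expR_gt0.
pose c := expR (- t) * m.
have mass_below := dens_measure_sublevel_bound pf lcf fy0 (ltW (mulr_gt0 (expR_gt0 (- t)) m0)).
have bound : Num.sqrt c / Num.sqrt (f y) * 2 ^+ n.+1 <= expR (- t / 5).
  apply: le_trans (expR_level_bound _ ht) => //.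
  by rewrite ler_wpM2r ?exprn_ge0 // sqrt_level_ratio_le.
have massC := dens_measureC mf f0 (measurable_sublevel mf c).
rewrite f1 -superlevelE // in massC.
rewrite EFinB leeBlDl // -massC; apply: leeD => //.
by apply: le_trans mass_below _; rewrite lee_fin.
Qed.
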